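(* Consider the following optical-network model. Each link $k$ has a set $A_k\subseteq\mathbb{Z}$ of available units. Each trait $t$ has a resource $\mathrm{RI}(t)$, a nonempty integer interval, and for each link $k$ the set $t\oplus k$ of derived traits satisfies: every $t'\in t\oplus k$ has $\mathrm{RI}(t')$ a maximal integer interval contained in $\mathrm{RI}(t)\cap A_k$, and for every maximal integer interval $J\subseteq \mathrm{RI}(t)\cap A_k$ there is $t'\in t\oplus k$ with $\mathrm{RI}(t')=J$. Fix a link $k$ and, for a label $l=(t_a,t_b)$ whose routes end at different nodes, let $l\oplus e=\{(t,t_b): t\in t_a\oplus k\}$, the resulting routes still ending at different nodes. Let $\mathrm{cost}$ be a real-valued function on labels such that for any labels $l_i,l_j$: if $\mathrm{cost}(l_i)\le\mathrm{cost}(l_j)$ then $\mathrm{cost}(l')\le\mathrm{cost}(l)$ for all $l'\in l_i\oplus e$ and all $l\in l_j\oplus e$. Let $l_i=(t_{i,a},t_{i,b})$, $l_j=(t_{j,a},t_{j,b})$ be labels. If $l_i\preceq'_{\ne} l_j$, then for every $l\in l_j\oplus e$ there exists $l'\in l_i\oplus e$ with $l'\preceq'_{\ne} l$.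
   Context: A trait describes a route (sequence of neighboring links) in an optical network together with its cost and the interval of contiguous frequency slot units available on all its links; $t\oplus k$ is the set of traits obtained by appending link $k$. A label is a pair of traits of two link-disjoint routes. For labels $l_i=(t_{i,a},t_{i,b})$, $l_j=(t_{j,a},t_{j,b})$ whose routes end at different nodes: $\mathrm{RI}(l_i)\supseteq_{\ne}\mathrm{RI}(l_j)$ iff $\mathrm{RI}(t_{i,a})\supseteq\mathrm{RI}(t_{j,a})$ and $\mathrm{RI}(t_{i,b})\supseteq\mathrm{RI}(t_{j,b})$; and $l_i\preceq'_{\ne} l_j$ iff $\mathrm{cost}(l_i)\le\mathrm{cost}(l_j)$ and $\mathrm{RI}(l_i)\supseteq_{\ne}\mathrm{RI}(l_j)$. *)

From Stdlib Require Import ZArith Reals.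
Open Scope Z_scope.

Definition zset := Z -> Prop.

Definition subset (X Y : zset) : Prop := forall x, X x -> Y x.
Definition same_set (X Y : zset) : Prop := forall x, X x <-> Y x.
Definition inter (X Y : zset) : zset := fun x => X x /\ Y x.

Definition is_interval (X : zset) : Prop :=
  exists a b : Z, a <= b /\ forall x, X x <-> a <= x <= b.

Definition max_interval_in (J X : zset) : Prop :=
  is_interval J /\ subset J X /\
  forall J', is_interval J' -> subset J J' -> subset J' X -> subset J' J.

Definition label (Trait : Type) := (Trait * Trait)%type.

(* l (+) e : extend the first route of the label by the fixed link,
   given ext_k t = the set t (+) k. *)
Definition label_ext {Trait : Type} (ext_k : Trait -> Trait -> Prop)
  (l l' : label Trait) : Prop :=
  exists t, ext_k (fst l) t /\ l' = (t, snd l).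

Definition RI_sup {Trait : Type} (RI : Trait -> zset) (li lj : label Trait) : Prop :=
  subset (RI (fst lj)) (RI (fst li)) /\ subset (RI (snd lj)) (RI (snd li)).

Definition prec' {Trait : Type} (RI : Trait -> zset) (cost : label Trait -> R)
  (li lj : label Trait) : Prop :=
  (cost li <= cost lj)%R /\ RI_sup RI li lj.

(* Within one link, a derived trait of [t] carries a maximal interval of
   [RI t ∩ A_k].  If [RI t_j ⊆ RI t_i], such an interval of [RI t_j ∩ A_k] is an
   interval inside the bounded set [RI t_i ∩ A_k], so it extends to a maximal
   interval there, which is carried by some derived trait of [t_i]. *)

From Stdlib Require Import ZArith Reals Lia Classical.
Open Scope Z_scope.

Lemma Z_least_exists (P : Z -> Prop) (a c : Z) :
  (forall x, P x -> a <= x) -> P c -> exists m, P m /\ forall x, P x -> m <= x.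
Proof.
  intros Hbound Pc.
  assert (Hc : a <= c) by auto.
  revert Pc; pattern c; revert c Hc.
  apply Zlt_lower_bound_ind; intros x IH Hx Px.
  destruct (classic (exists y, P y /\ y < x)) as [[y [Py Hyx]] | Hnone].
  - apply (IH y); auto.
  - exists x; split; [exact Px|].
    intros y Py; apply Z.nlt_ge; intros Hyx; apply Hnone; eauto.
Qed.

Lemma Z_greatest_exists (P : Z -> Prop) (b c : Z) :
  (forall x, P x -> x <= b) -> P c -> exists m, P m /\ forall x, P x -> x <= m.
Proof.
  intros Hbound Pc.
  destruct (Z_least_exists (fun x => P (- x)) (- b) (- c)) as [m [Pm Hm]].
  - intros x Px; specialize (Hbound _ Px); lia.
  - now rewrite Z.opp_involutive.
  - exists (- m); split; [exact Pm|].
    intros x Px; specialize (Hm (- x)); rewrite Z.opp_involutive in Hm.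
    specialize (Hm Px); lia.
Qed.

Lemma interval_extends_to_max_interval (X J : zset) (a b : Z) :
  (forall x, X x -> a <= x <= b) -> is_interval J -> subset J X ->
  exists J', max_interval_in J' X /\ subset J J'.
Proof.
  intros HX [c [d [Hcd HJ]]] HJX.
  (* [lo] is the leftmost start of an [X]-interval ending at [d]; [hi] is the
     rightmost end of an [X]-interval starting at [lo]. *)
  set (Left := fun p => p <= c /\ forall y, p <= y <= d -> X y).
  set (Right := fun lo q => d <= q /\ forall y, lo <= y <= q -> X y).
  assert (Left_c : Left c).
  { split; [lia|]; intros y Hy; apply HJX, HJ; exact Hy. }
  destruct (Z_least_exists Left a c) as [lo [[lo_c Left_lo] lo_least]];
    [|exact Left_c|].
  { intros p [Hpc Hp]; destruct (HX p (Hp p ltac:(lia))); lia. }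
  assert (Right_d : Right lo d) by (split; [lia | exact Left_lo]).
  destruct (Z_greatest_exists (Right lo) b d) as [hi [[d_hi Right_hi] hi_greatest]];
    [|exact Right_d|].
  { intros q [Hdq Hq]; destruct (HX q (Hq q ltac:(lia))); lia. }
  exists (fun x => lo <= x <= hi); split; [split; [|split]|].
  - exists lo, hi; split; [lia | tauto].
  - exact Right_hi.
  - intros K [p [q [Hpq HK]]] Hsub HKX x Hx.
    assert (p_lo : p <= lo) by (apply HK, Hsub; lia).
    assert (hi_q : hi <= q) by (apply HK, Hsub; lia).
    assert (lo_p : lo <= p).
    { apply lo_least; split; [lia|]; intros y Hy; apply HKX, HK; lia. }
    assert (q_hi : q <= hi).
    { apply hi_greatest; split; [lia|]; intros y Hy; apply HKX, HK; lia. }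
    apply HK in Hx; lia.
  - intros x Hx; apply HJ in Hx; lia.
Qed.

Section DerivedTraits.

Variables (Trait Link : Type) (A : Link -> zset) (RI : Trait -> zset)
  (ext : Trait -> Link -> Trait -> Prop).

Hypothesis HRI : forall t, is_interval (RI t).
Hypothesis Hext_max :
  forall t k t', ext t k t' -> max_interval_in (RI t') (inter (RI t) (A k)).
Hypothesis Hext_all : forall t k J, max_interval_in J (inter (RI t) (A k)) ->
  exists t', ext t k t' /\ same_set (RI t') J.

Lemma ext_RI_monotone (ti tj t : Trait) (k : Link) :
  subset (RI tj) (RI ti) -> ext tj k t ->
  exists t', ext ti k t' /\ subset (RI t) (RI t').
Proof.
  intros Hsub Ht.
  destruct (Hext_max _ _ _ Ht) as [HJ [HJsub _]].
  destruct (HRI ti) as [a [b [_ Hab]]].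
  destruct (interval_extends_to_max_interval (inter (RI ti) (A k)) (RI t) a b)
    as [J' [HJ' HtJ']].
  - intros x [Hx _]; apply Hab, Hx.
  - exact HJ.
  - intros x Hx; destruct (HJsub x Hx); split; auto.
  - destruct (Hext_all _ _ _ HJ') as [t' [Ht' Hsame]].
    exists t'; split; [exact Ht'|].
    intros x Hx; apply Hsame, HtJ', Hx.
Qed.

End DerivedTraits.

Theorem proposition4
  (Trait Link : Type)
  (A : Link -> zset)                        (* available units of each link *)
  (RI : Trait -> zset)                      (* resource of each trait *)
  (ext : Trait -> Link -> Trait -> Prop)    (* ext t k t' : t' \in t (+) k *)
  (diff_ends : label Trait -> Prop)         (* the two routes end at different nodes *)
  (cost : label Trait -> R)
  (HRI : forall t, is_interval (RI t))
  (Hext_max : forall t k t', ext t k t' -> max_interval_in (RI t') (inter (RI t) (A k)))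
  (Hext_all : forall t k J, max_interval_in J (inter (RI t) (A k)) ->
                exists t', ext t k t' /\ same_set (RI t') J)
  (k : Link)
  (Hdiff_ext : forall l l', diff_ends l -> label_ext (fun t t' => ext t k t') l l' ->
                 diff_ends l')
  (Hcost : forall li lj, diff_ends li -> diff_ends lj -> (cost li <= cost lj)%R ->
             forall l' l, label_ext (fun t t' => ext t k t') li l' ->
                          label_ext (fun t t' => ext t k t') lj l ->
                          (cost l' <= cost l)%R)
  (li lj : label Trait)
  (Hi : diff_ends li) (Hj : diff_ends lj)
  (Hprec : prec' RI cost li lj) :
  forall l, label_ext (fun t t' => ext t k t') lj l ->
    exists l', label_ext (fun t t' => ext t k t') li l' /\ prec' RI cost l' l.
Proof.
  intros l [t [Ht ->]].
  destruct Hprec as [Hcost_ij [Hsub_a Hsub_b]].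
  destruct (ext_RI_monotone _ _ _ _ _ HRI Hext_max Hext_all _ _ _ _ Hsub_a Ht)
    as [t' [Ht' Hsub]].
  assert (Hl' : label_ext (fun t t' => ext t k t') li (t', snd li))
    by (exists t'; split; auto).
  exists (t', snd li); split; [exact Hl'|].
  split; [|split; assumption].
  apply (Hcost li lj Hi Hj Hcost_ij _ _ Hl'); exists t; split; auto.
Qed.
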